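(* Consider the critical discount factor \[\delta^*(p,c,\beta)=\frac{p-2c}{p-\beta p^2+p^2}\] on the admissible region of parameters $p\in(0,1]$, constant cost $c\ge0$ (not depending on $p$), $\beta<1$, satisfying $c<\frac12p+\frac12(\beta-1)p^2$. Then: (i) $\delta^*$ is strictly decreasing in $c$; (ii) $\delta^*$ is strictly increasing in $\beta$; (iii) $\delta^*$ is not monotone in $p$: the partial derivative $\partial\delta^*/\partial p$ is positive at some admissible parameter points and negative at others.
   Context: $\delta^*$ is the threshold discount factor above which two symmetric players in an infinitely repeated Prisoners' Dilemma of ranking-manipulation attacks sustain cooperation under the grim trigger strategy; $p$ is the attack success probability, $c$ the per-period attack cost, $\beta$ the market degradation factor under mutual successful attacks. The inequality $c<\frac12p+\frac12(\beta-1)p^2$ is the standing assumption guaranteeing the Prisoners' Dilemma payoff ordering. *)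

From Stdlib Require Import Reals.
Open Scope R_scope.

Definition delta_star (p c beta : R) : R :=
  (p - 2 * c) / (p - beta * p ^ 2 + p ^ 2).

Definition admissible (p c beta : R) : Prop :=
  0 < p <= 1 /\ 0 <= c /\ beta < 1 /\ c < / 2 * p + / 2 * (beta - 1) * p ^ 2.

(** The numerator [p - 2c] of [delta*] is positive on the admissible region
    and decreases in [c], while the denominator [p + (1 - beta) p^2] is
    positive and decreases in [beta]; this gives (i) and (ii).  By the
    quotient rule, [d delta*/dp] has the sign of
    [2c (1 + 2 (1 - beta) p) - (1 - beta) p^2], which is negative for [c = 0]
    and positive when [c] is close to its admissible bound at [p = 1]. *)

From Stdlib Require Import Reals Lra Psatz.
From Coquelicot Require Import Coquelicot.
Open Scope R_scope.

Lemma delta_star_denom_pos (p beta : R) :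
  0 < p -> beta < 1 -> 0 < p - beta * p ^ 2 + p ^ 2.
Proof. intros Hp Hb; nra. Qed.

Lemma admissible_numer_pos (p c beta : R) :
  admissible p c beta -> 0 < p - 2 * c.
Proof. intros [[Hp _] [_ [Hb Hc]]]; nra. Qed.

Lemma delta_star_decreasing_in_c (p beta c1 c2 : R) :
  0 < p - beta * p ^ 2 + p ^ 2 -> c1 < c2 ->
  delta_star p c2 beta < delta_star p c1 beta.
Proof.
  intros HD Hc; unfold delta_star, Rdiv.
  apply Rmult_lt_compat_r; [apply Rinv_0_lt_compat |]; lra.
Qed.

Lemma delta_star_increasing_in_beta (p c b1 b2 : R) :
  0 < p -> 0 < p - 2 * c -> b1 < b2 -> b2 < 1 ->
  delta_star p c b1 < delta_star p c b2.
Proof.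
  intros Hp HN Hb12 Hb2; unfold delta_star, Rdiv.
  apply Rmult_lt_compat_l; [exact HN |].
  apply Rinv_lt_contravar.
  - apply Rmult_lt_0_compat; apply delta_star_denom_pos; lra.
  - assert (Hp2 : 0 < p ^ 2) by (apply pow_lt; exact Hp).
    nra.
Qed.

(* The quotient-rule numerator [D - (p - 2c) D'], with
   [D = p - beta p^2 + p^2], simplified. *)
Definition delta_star_dp (p c beta : R) : R :=
  (2 * c * (1 + 2 * (1 - beta) * p) - (1 - beta) * p ^ 2)
  / (p - beta * p ^ 2 + p ^ 2) ^ 2.

Lemma derivable_pt_lim_delta_star (p c beta : R) :
  p - beta * p ^ 2 + p ^ 2 <> 0 ->
  derivable_pt_lim (fun q => delta_star q c beta) p (delta_star_dp p c beta).
Proof.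
  intros HD; apply is_derive_Reals; unfold delta_star, delta_star_dp.
  auto_derive; [exact HD |].
  field; exact HD.
Qed.

Lemma delta_star_dp_pos (p c beta : R) :
  0 < p -> beta < 1 ->
  (1 - beta) * p ^ 2 < 2 * c * (1 + 2 * (1 - beta) * p) ->
  0 < delta_star_dp p c beta.
Proof.
  intros Hp Hb Hsign; apply Rdiv_lt_0_compat; [lra |].
  apply pow_lt, delta_star_denom_pos; assumption.
Qed.

Lemma delta_star_dp_neg (p c beta : R) :
  0 < p -> beta < 1 ->
  2 * c * (1 + 2 * (1 - beta) * p) < (1 - beta) * p ^ 2 ->
  delta_star_dp p c beta < 0.
Proof.
  intros Hp Hb Hsign; apply Rdiv_neg_pos; [lra |].
  apply pow_lt, delta_star_denom_pos; assumption.
Qed.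

Theorem theorem2 :
  (* (i) strictly decreasing in c *)
  (forall p beta c1 c2,
      admissible p c1 beta -> admissible p c2 beta -> c1 < c2 ->
      delta_star p c2 beta < delta_star p c1 beta) /\
  (* (ii) strictly increasing in beta *)
  (forall p c b1 b2,
      admissible p c b1 -> admissible p c b2 -> b1 < b2 ->
      delta_star p c b1 < delta_star p c b2) /\
  (* (iii) not monotone in p: the partial derivative in p takes both signs *)
  (exists p c beta d, admissible p c beta /\
      derivable_pt_lim (fun q => delta_star q c beta) p d /\ 0 < d) /\
  (exists p c beta d, admissible p c beta /\
      derivable_pt_lim (fun q => delta_star q c beta) p d /\ d < 0).
Proof.
  split; [| split; [| split]].
  - intros p beta c1 c2 [[Hp _] [_ [Hb _]]] _ Hc.
    apply delta_star_decreasing_in_c; [apply delta_star_denom_pos |]; assumption.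
  - intros p c b1 b2 Hadm1 [[Hp _] [_ [Hb2 _]]] Hb.
    apply delta_star_increasing_in_beta; try assumption.
    exact (admissible_numer_pos _ _ _ Hadm1).
  - exists 1, (1 / 5), (1 / 2), (delta_star_dp 1 (1 / 5) (1 / 2)).
    split; [unfold admissible; lra |].
    split; [apply derivable_pt_lim_delta_star; lra |].
    apply delta_star_dp_pos; lra.
  - exists (1 / 2), 0, 0, (delta_star_dp (1 / 2) 0 0).
    split; [unfold admissible; lra |].
    split; [apply derivable_pt_lim_delta_star; lra |].
    apply delta_star_dp_neg; lra.
Qed.
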